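(* Let $K_{3,3}$ be the complete bipartite graph with parts $\{1,2,3\}$ and $\{4,5,6\}$, and regard its automorphism group as the subgroup $${\mathrm{Aut}}(K_{3,3})=\langle (12),(123),(45),(456),(14)(25)(36)\rangle\subset S_6,$$ which is isomorphic to $(D_3\times D_3)\rtimes\mathbb{Z}_2$. Up to isomorphism, the subgroups of ${\mathrm{Aut}}(K_{3,3})$ are exactly: $(D_3\times D_3)\rtimes\mathbb{Z}_2$, $D_3\times D_3$, $(\mathbb{Z}_3\times\mathbb{Z}_3)\rtimes\mathbb{Z}_4$, $(\mathbb{Z}_3\times\mathbb{Z}_3)\rtimes\mathbb{Z}_2$, $D_3\times\mathbb{Z}_3$, $D_6$, $\mathbb{Z}_3\times\mathbb{Z}_3$, $D_4$, $D_3$, $\mathbb{Z}_6$, $D_2$, $\mathbb{Z}_4$, $\mathbb{Z}_3$, $\mathbb{Z}_2$, and the trivial group.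
   Context: $D_n$ denotes the dihedral group of order $2n$ (so $D_3\cong S_3$ and $D_2\cong\mathbb{Z}_2\times\mathbb{Z}_2$), and $\mathbb{Z}_n$ the cyclic group of order $n$. $(D_3\times D_3)\rtimes\mathbb{Z}_2$ is the semidirect product in which the generator of $\mathbb{Z}_2$ acts by swapping the two factors (the wreath product $S_3\wr\mathbb{Z}_2$). $(\mathbb{Z}_3\times\mathbb{Z}_3)\rtimes\mathbb{Z}_2$ is the semidirect product in which the generator of $\mathbb{Z}_2$ acts by inversion $g\mapsto g^{-1}$. $(\mathbb{Z}_3\times\mathbb{Z}_3)\rtimes\mathbb{Z}_4$ is the semidirect product in which a generator of $\mathbb{Z}_4$ acts on $\mathbb{Z}_3\times\mathbb{Z}_3$ by an automorphism of order $4$ (whose square is inversion); e.g. the subgroup of ${\mathrm{Aut}}(K_{3,3})$ generated by $(123),(456),(1425)(36)$. *)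

From mathcomp Require Import all_boot all_fingroup.
From Stdlib Require List.
Set Implicit Arguments. Unset Strict Implicit. Unset Printing Implicit Defensive.
Local Open Scope group_scope.

(* Vertices 1..6 of K_{3,3} are encoded as the ordinals 0..5 of 'I_6
   (vertex k is  inord (k-1)).  Parts {1,2,3} and {4,5,6}. *)
Definition v (k : nat) : 'I_6 := inord k.-1.

(* Permutations composed left to right ((s * t) x = t (s x)), MathComp style. *)
Definition t12 : {perm 'I_6} := tperm (v 1) (v 2).
Definition c123 : {perm 'I_6} := tperm (v 2) (v 3) * tperm (v 1) (v 2).
Definition t45 : {perm 'I_6} := tperm (v 4) (v 5).
Definition c456 : {perm 'I_6} := tperm (v 5) (v 6) * tperm (v 4) (v 5).
Definition swap : {perm 'I_6} :=
  tperm (v 1) (v 4) * tperm (v 2) (v 5) * tperm (v 3) (v 6).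

Definition AutK33 : {set {perm 'I_6}} := <<[set t12; c123; t45; c456; swap]>>.

(* The fifteen isomorphism types, given by standard presentations
   (all of these presented groups are finite). D_n has order 2n. *)

Definition isWreathD3 (gT : finGroupType) (G : {set gT}) : Prop :=
  G \isog Grp (a : s : b : u : t :
     (a ^+ 3, s ^+ 2, (a * s) ^+ 2, b ^+ 3, u ^+ 2, (b * u) ^+ 2,
      [~ a, b], [~ a, u], [~ s, b], [~ s, u],
      t ^+ 2, a ^ t = b, s ^ t = u, b ^ t = a, u ^ t = s)).

Definition isD3xD3 (gT : finGroupType) (G : {set gT}) : Prop :=
  G \isog Grp (a : s : b : u :
     (a ^+ 3, s ^+ 2, (a * s) ^+ 2, b ^+ 3, u ^+ 2, (b * u) ^+ 2,
      [~ a, b], [~ a, u], [~ s, b], [~ s, u])).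

Definition isZ3Z3sdZ4 (gT : finGroupType) (G : {set gT}) : Prop :=
  G \isog Grp (a : b : t :
     (a ^+ 3, b ^+ 3, [~ a, b], t ^+ 4, a ^ t = b, b ^ t = a ^-1)).

Definition isZ3Z3sdZ2 (gT : finGroupType) (G : {set gT}) : Prop :=
  G \isog Grp (a : b : t :
     (a ^+ 3, b ^+ 3, [~ a, b], t ^+ 2, a ^ t = a ^-1, b ^ t = b ^-1)).

Definition isD3xZ3 (gT : finGroupType) (G : {set gT}) : Prop :=
  G \isog Grp (a : s : c :
     (a ^+ 3, s ^+ 2, (a * s) ^+ 2, c ^+ 3, [~ a, c], [~ s, c])).

Definition isDihedral (n : nat) (gT : finGroupType) (G : {set gT}) : Prop :=
  G \isog Grp (a : s : (a ^+ n, s ^+ 2, (a * s) ^+ 2)).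

Definition isZ3xZ3 (gT : finGroupType) (G : {set gT}) : Prop :=
  G \isog Grp (a : b : (a ^+ 3, b ^+ 3, [~ a, b])).

Definition isCyclicOrd (n : nat) (gT : finGroupType) (G : {set gT}) : Prop :=
  G \isog Grp (a : (a ^+ n)).

Definition isTrivialGrp (gT : finGroupType) (G : {set gT}) : Prop :=
  G \isog Grp (a : (a)).

Definition listed_types : seq (forall gT : finGroupType, {set gT} -> Prop) :=
  [:: isWreathD3; isD3xD3; isZ3Z3sdZ4; isZ3Z3sdZ2; isD3xZ3; isDihedral 6;
      isZ3xZ3; isDihedral 4; isDihedral 3; isCyclicOrd 6; isDihedral 2;
      isCyclicOrd 4; isCyclicOrd 3; isCyclicOrd 2; isTrivialGrp].

From mathcomp Require Import all_boot all_fingroup.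
From mathcomp Require Import cyclic zify.
From Stdlib Require List.
Set Implicit Arguments. Unset Strict Implicit. Unset Printing Implicit Defensive.
Import Presentation.
Local Open Scope group_scope.

(* Aut(K_{3,3}) has 72 elements, so its subgroups can be enumerated by
   computation.  Every subgroup arises from the trivial group by adjoining
   elements one at a time; hence a list of subgroups that contains the trivial
   group and is closed under adjoining any element contains them all.  Each
   listed subgroup is given by generators satisfying one of the fifteen
   presentations, and its order equals an a priori bound on the order of any
   group with that presentation, so it is isomorphic to the presented group.
   The bounds come from a normal series: each generator has bounded order and
   normalises the subgroup generated by the previous ones. *)

Lemma nth_In_seq (T : Type) (x0 : T) (s : seq T) k : k < size s -> List.In (nth x0 s k) s.
Proof. by elim: s k => [|x s IHs] [|k] //= lt_k; [left | right; apply: IHs]. Qed.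

Lemma In_seq_nth (T : Type) (x0 : T) (s : seq T) x :
  List.In x s -> exists2 k, k < size s & x = nth x0 s k.
Proof.
elim: s => [|y s IHs] //= [-> | /IHs[k lt_k ->]]; first by exists 0.
by exists k.+1.
Qed.

(** * Presentations by generating sequences *)

Section PresentationsBySequences.
Implicit Types (gT rT : finGroupType) (p : term -> type).

Fixpoint holds gT (e : seq gT) (f : formula) : bool :=
  match f with
  | Eq2 s t => eval e s == eval e t
  | And f1 f2 => holds e f1 && holds e f2
  end.

Fixpoint type_arity n (q : type) : nat :=
  match q with
  | Generator q' => (type_arity n.+1 (q' (Cst n))).+1
  | Formula _ => 0
  end.

Fixpoint type_relations n (q : type) : formula :=
  match q with
  | Generator q' => type_relations n.+1 (q' (Cst n))
  | Formula f => f
  end.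

Definition pres_arity p := (type_arity 1 (p (Cst 0))).+1.
Definition pres_relations p := type_relations 1 (p (Cst 0)).

Lemma and_relE (vT : finType) (v1 v2 : vT) r :
  and_rel v1 v2 r = (v1 == v2) && r :> bool.
Proof. by case: r => //=; rewrite andbT. Qed.

Lemma relE gT (e : seq gT) f r : rel e f r = holds e f && r :> bool.
Proof.
elim: f r => [s t | f1 IH1 f2 IH2] r /=; first exact: and_relE.
by rewrite IH1 IH2 andbA.
Qed.

Lemma satP gT (vT : finType) (B : {set gT}) n (s : vT -> env gT) q :
  sat B n s q <-> exists v xs, size xs = type_arity n q /\
    let: Env A e := s v in
    (foldl (fun A x => A <*> <[x]>) A xs == B)
      && holds (rev e ++ xs) (type_relations n q).
Proof.
elim: q n vT s => [q' IH | f] n vT s /=.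
  rewrite IH; split.
    case=> [[v x] [xs [sz H]]]; exists v, (x :: xs); split; first by rewrite /= sz.
    by move: H => /=; case: (s v) => A e /=; rewrite rev_cons cat_rcons.
  case=> v [[|x xs] [//= [sz] H]]; exists (v, x), xs; split => //.
  by move: H; case: (s v) => A e /=; rewrite rev_cons cat_rcons.
split.
  case/existsP => v; case E: (s v) => [A e]; rewrite and_relE relE andbT => H.
  by exists v, [::]; rewrite E cats0.
case=> v [xs [/size0nil -> H]]; apply/existsP; exists v; move: H.
by case: (s v) => A e; rewrite and_relE relE andbT cats0.
Qed.

Lemma foldl_join_cycles gT (A : {set gT}) xs :
  foldl (fun B x => B <*> <[x]>) <<A>> xs = <<A :|: [set:: xs]>>.
Proof.
elim: xs A => [|x xs IH] A /=; first by rewrite set_nil setU0.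
rewrite joing_idl /cycle joing_idr joingE IH; congr <<_>>.
by apply/setP => y; rewrite !inE orbA.
Qed.

Lemma homGrpP gT (G : {set gT}) p :
  G \homg Grp p <-> exists2 xs : seq gT, size xs = pres_arity p &
    (<<[set:: xs]>> == G) && holds xs (pres_relations p).
Proof.
have setU1E (x : gT) xs : [set x] :|: [set:: xs] = [set:: x :: xs].
  by apply/setP => y; rewrite !inE.
rewrite /hom satP; split=> [[x [xs [sz]]] | [[|x xs] //= [sz]]].
  rewrite /= /cycle foldl_join_cycles setU1E => hG.
  by exists (x :: xs); rewrite /= ?sz.
by move=> hG; exists x, xs; rewrite /= /cycle foldl_join_cycles setU1E.
Qed.

Lemma gen_homGrp gT (xs : seq gT) p :
  size xs = pres_arity p -> holds xs (pres_relations p) -> <<[set:: xs]>> \homg Grp p.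
Proof. by move=> sz hxs; apply/homGrpP; exists xs; rewrite ?eqxx. Qed.

Lemma eval_zip gT rT (xs : seq gT) (ys : seq rT) t :
  size xs = size ys -> eval (zip xs ys) t = (eval xs t, eval ys t).
Proof.
move=> sz; elim: t => //= [i | t -> | t -> m | t1 -> t2 -> | t1 -> t2 -> | t1 -> t2 ->] //.
- exact: nth_zip.
- by elim: m => // m IHm; rewrite !expgS IHm.
Qed.

Lemma holds_zip gT rT (xs : seq gT) (ys : seq rT) f :
  size xs = size ys -> holds (zip xs ys) f = holds xs f && holds ys f.
Proof.
move=> sz; elim: f => [s t | f1 IH1 f2 IH2] /=; last by rewrite IH1 IH2 andbACA.
by rewrite !eval_zip // xpair_eqE.
Qed.

Lemma imset_set_seq (aT rT : finType) (f : aT -> rT) (s : seq aT) :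
  f @: [set:: s] = [set:: map f s].
Proof.
apply/setP => y; rewrite inE; apply/imsetP/mapP => [] [x];
  by rewrite ?inE => xs ->; exists x; rewrite ?inE.
Qed.

(* The subgroup D of G * H generated by the pairs of generators satisfies p,
   so #|D| <= #|G| and the first projection is an isomorphism D ~ G; the
   second projection then exhibits H as a quotient of G. *)
Lemma isoGrp_of_card_max gT (G : {group gT}) p :
  G \homg Grp p -> (forall rT (H : {group rT}), H \homg Grp p -> #|H| <= #|G|) ->
  G \isog Grp p.
Proof.
move=> homGp maxG; apply: intro_isoGrp => // rT H homHp.
have [xs sz_xs /andP[/eqP defG hxs]] := (homGrpP G p).1 homGp.
have [ys sz_ys /andP[/eqP defH hys]] := (homGrpP H p).1 homHp.
have sz : size xs = size ys by rewrite sz_xs sz_ys.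
pose D := <<[set:: zip xs ys]>>%G.
have homDp : D \homg Grp p.
  by apply: gen_homGrp; rewrite ?size_zip ?sz ?minnn // holds_zip // hxs hys.
have proj_gen (aT : finGroupType) (f : {morphism [set: gT * rT] >-> aT}) zs :
    map f (zip xs ys) = zs -> f @* D = <<[set:: zs]>>.
  by move=> fzs; rewrite morphim_gen ?subsetT // morphimE setTI imset_set_seq fzs.
have DG : [morphism of fst] @* D = G.
  by rewrite -defG; apply: proj_gen; rewrite -/(unzip1 _) unzip1_zip ?sz.
have DH : [morphism of snd] @* D = H.
  by rewrite -defH; apply: proj_gen; rewrite -/(unzip2 _) unzip2_zip ?sz.
have isoGD : G \isog D.
  by rewrite isogEcard -{1}DG morphim_homg; have := maxG _ _ homDp.
by apply: homg_trans (isog_hom (isog_symr isoGD)); rewrite -DH morphim_homg.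
Qed.
End PresentationsBySequences.

(** * Orders of presented groups *)

Section OrderBounds.
Variable gT : finGroupType.
Implicit Types (x y : gT) (ys : seq gT).

Lemma card_gen_nil : #|<<[set:: [::] : seq gT]>>| <= 1.
Proof. by rewrite set_nil gen0 cards1. Qed.

(* x normalises <<ys>>, so <<ys, x>> = <<ys>> * <[x]>. *)
Lemma card_gen_rcons_le ys x m n :
  #|<<[set:: ys]>>| <= m -> 0 < n -> x ^+ n = 1 ->
  all (fun y => y ^ x \in <<[set:: ys]>>) ys ->
  #|<<[set:: rcons ys x]>>| <= m * n.
Proof.
move=> le_m n_gt0 xn1 /allP nKx; set K := <<[set:: ys]>>.
have -> : <<[set:: rcons ys x]>> = K <*> <[x]>.
  rewrite /K /cycle joing_idl joing_idr; congr <<_>>.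
  by apply/setP => z; rewrite !inE mem_rcons in_cons orbC.
have nKx' : x \in 'N(K).
  rewrite inE /K -genJ gen_subG; apply/subsetP => z.
  by rewrite mem_conjg inE => /nKx; rewrite conjgKV.
rewrite norm_joinEr ?cycle_subG //; apply: (@leq_trans (#|K| * #|<[x]>|)).
  by rewrite mul_cardG leq_pmulr ?cardG_gt0.
by rewrite leq_mul // -orderE dvdn_leq // order_dvdn xn1.
Qed.

Lemma card_gen1_le x n : 0 < n -> x ^+ n = 1 -> #|<<[set:: [:: x]]>>| <= n.
Proof.
by move=> n_gt0 xn1; rewrite -[n]mul1n; apply: (card_gen_rcons_le card_gen_nil).
Qed.

Lemma conjg_dihedral x y : y ^+ 2 = 1 -> (x * y) ^+ 2 = 1 -> x ^ y = x^-1.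
Proof.
move=> y2 xy2; have yV : y^-1 = y by apply/eqP; rewrite eq_invg_mul -y2 expgS expg1.
have xyxy : x * y * x * y = 1 by rewrite -mulgA -xy2 expgS expg1.
by apply/eqP; rewrite eq_sym eq_invg_mul conjgE yV !mulgA xyxy.
Qed.

Lemma conjg_commute x y : [~ x, y] = 1 -> x ^ y = x.
Proof. by move/eqP/conjg_fixP. Qed.

End OrderBounds.

(* Closes [all (fun y => y ^ x \in <<[set:: ys]>>) ys] once each conjugate has
   been rewritten to a generator or the inverse of one. *)
Ltac gen_mem := rewrite /= ?andbT; repeat (apply/andP; split);
  rewrite ?groupV; apply: mem_gen; by rewrite !inE eqxx ?orbT.

Notation "'Pres' ( x : p )" := (fun x => Cast p)
  (at level 0, x ident, p custom group_presentation at level 200).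

Definition wreath_pres : term -> type := Pres (a : s : b : u : t :
  (a ^+ 3, s ^+ 2, (a * s) ^+ 2, b ^+ 3, u ^+ 2, (b * u) ^+ 2,
   [~ a, b], [~ a, u], [~ s, b], [~ s, u],
   t ^+ 2, a ^ t = b, s ^ t = u, b ^ t = a, u ^ t = s)).
Definition D3xD3_pres : term -> type := Pres (a : s : b : u :
  (a ^+ 3, s ^+ 2, (a * s) ^+ 2, b ^+ 3, u ^+ 2, (b * u) ^+ 2,
   [~ a, b], [~ a, u], [~ s, b], [~ s, u])).
Definition Z3Z3_Z4_pres : term -> type := Pres (a : b : t :
  (a ^+ 3, b ^+ 3, [~ a, b], t ^+ 4, a ^ t = b, b ^ t = a ^-1)).
Definition Z3Z3_Z2_pres : term -> type := Pres (a : b : t :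
  (a ^+ 3, b ^+ 3, [~ a, b], t ^+ 2, a ^ t = a ^-1, b ^ t = b ^-1)).
Definition D3xZ3_pres : term -> type := Pres (a : s : c :
  (a ^+ 3, s ^+ 2, (a * s) ^+ 2, c ^+ 3, [~ a, c], [~ s, c])).
Definition dihedral_pres n : term -> type := Pres (a : s : (a ^+ n, s ^+ 2, (a * s) ^+ 2)).
Definition Z3xZ3_pres : term -> type := Pres (a : b : (a ^+ 3, b ^+ 3, [~ a, b])).
Definition cyclic_pres n : term -> type := Pres (a : (a ^+ n)).
Definition trivial_pres : term -> type := Pres (a : (a)).

Lemma card_homGrp_cyclic n rT (H : {group rT}) :
  0 < n -> hom H (cyclic_pres n) -> #|H| <= n.
Proof. by move=> n_gt0 /homGrpP[[|a []] //= _ /andP[/eqP <- /eqP]]; apply: card_gen1_le. Qed.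

Lemma card_homGrp_trivial rT (H : {group rT}) :
  H \homg Grp trivial_pres -> #|H| <= 1.
Proof. by move=> /homGrpP[[|a []] //= _ /andP[/eqP <- /eqP a1]]; apply: card_gen1_le. Qed.

Lemma card_homGrp_dihedral n rT (H : {group rT}) :
  0 < n -> hom H (dihedral_pres n) -> #|H| <= n * 2.
Proof.
move=> n_gt0 /homGrpP[[|a [|s []]] //= _ /andP[/eqP <-]].
move=> /and3P[/eqP an /eqP s2 /eqP as2].
apply: (card_gen_rcons_le (ys := [:: a])) => //; first exact: card_gen1_le.
by rewrite /= (conjg_dihedral s2 as2); gen_mem.
Qed.

Lemma card_homGrp_Z3xZ3 rT (H : {group rT}) :
  H \homg Grp Z3xZ3_pres -> #|H| <= 3 * 3.
Proof.
move=> /homGrpP[[|a [|b []]] //= _ /andP[/eqP <-]].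
move=> /and3P[/eqP a3 /eqP b3 /eqP cab].
apply: (card_gen_rcons_le (ys := [:: a])) => //; first exact: card_gen1_le.
by rewrite /= (conjg_commute cab); gen_mem.
Qed.

Lemma card_homGrp_D3xZ3 rT (H : {group rT}) :
  H \homg Grp D3xZ3_pres -> #|H| <= 3 * 2 * 3.
Proof.
move=> /homGrpP[[|a [|s [|c []]]] //= _ /andP[/eqP <-]].
move=> /and5P[/eqP a3 /eqP s2 /eqP as2 /eqP c3 /andP[/eqP cac /eqP csc]].
apply: (card_gen_rcons_le (ys := [:: a; s])) => //.
  by apply: (@card_homGrp_dihedral 3) => //; apply: gen_homGrp => //=; rewrite a3 s2 as2 !eqxx.
by rewrite /= (conjg_commute cac) (conjg_commute csc); gen_mem.
Qed.

Lemma card_homGrp_Z3Z3_Z2 rT (H : {group rT}) :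
  H \homg Grp Z3Z3_Z2_pres -> #|H| <= 3 * 3 * 2.
Proof.
move=> /homGrpP[[|a [|b [|t []]]] //= _ /andP[/eqP <-]].
move=> /and5P[/eqP a3 /eqP b3 /eqP cab /eqP t2 /andP[/eqP at' /eqP bt]].
apply: (card_gen_rcons_le (ys := [:: a; b])) => //.
  by apply: card_homGrp_Z3xZ3; apply: gen_homGrp => //=; rewrite a3 b3 cab !eqxx.
by rewrite /= at' bt; gen_mem.
Qed.

Lemma card_homGrp_Z3Z3_Z4 rT (H : {group rT}) :
  H \homg Grp Z3Z3_Z4_pres -> #|H| <= 3 * 3 * 4.
Proof.
move=> /homGrpP[[|a [|b [|t []]]] //= _ /andP[/eqP <-]].
move=> /and5P[/eqP a3 /eqP b3 /eqP cab /eqP t4 /andP[/eqP at' /eqP bt]].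
apply: (card_gen_rcons_le (ys := [:: a; b])) => //.
  by apply: card_homGrp_Z3xZ3; apply: gen_homGrp => //=; rewrite a3 b3 cab !eqxx.
by rewrite /= at' bt; gen_mem.
Qed.

Lemma card_homGrp_D3xD3 rT (H : {group rT}) :
  H \homg Grp D3xD3_pres -> #|H| <= 3 * 2 * 3 * 2.
Proof.
move=> /homGrpP[[|a [|s [|b [|u []]]]] //= _ /andP[/eqP <-]].
move=> /and5P[/eqP a3 /eqP s2 /eqP as2 /eqP b3 /and5P[/eqP u2 /eqP bu2]].
move=> /eqP cab /eqP cau /andP[/eqP csb /eqP csu].
apply: (card_gen_rcons_le (ys := [:: a; s; b])) => //.
  apply: (card_gen_rcons_le (ys := [:: a; s])) => //.
    by apply: (@card_homGrp_dihedral 3) => //; apply: gen_homGrp => //=; rewrite a3 s2 as2 !eqxx.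
  by rewrite /= (conjg_commute cab) (conjg_commute csb); gen_mem.
by rewrite /= (conjg_commute cau) (conjg_commute csu) (conjg_dihedral u2 bu2); gen_mem.
Qed.

Lemma card_homGrp_wreath rT (H : {group rT}) :
  H \homg Grp wreath_pres -> #|H| <= 3 * 2 * 3 * 2 * 2.
Proof.
move=> /homGrpP[[|a [|s [|b [|u [|t []]]]]] //= _ /andP[/eqP <-]].
move=> /and5P[/eqP a3 /eqP s2 /eqP as2 /eqP b3 /and5P[/eqP u2 /eqP bu2]].
move=> /eqP cab /eqP cau /and5P[/eqP csb /eqP csu /eqP t2 /eqP at' /and3P].
move=> [/eqP st /eqP bt /eqP ut].
apply: (card_gen_rcons_le (ys := [:: a; s; b; u])) => //.
  apply: card_homGrp_D3xD3; apply: gen_homGrp => //=.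
  by rewrite a3 s2 as2 b3 u2 bu2 cab cau csb csu !eqxx.
by rewrite /= at' st bt ut; gen_mem.
Qed.

(** * Permutations as words *)

Section PermWords.
Variable k : nat.
Implicit Types (u w : seq nat) (s : {perm 'I_k}).

Definition perm_word w := [&& size w == k, uniq w & all (gtn k) w].

Definition word_mul u w := map (nth 0 w) u.

Definition perm_of_word w : {perm 'I_k} :=
  insubd (1 : {perm 'I_k}) ([ffun i : 'I_k => insubd i (nth 0 w i)] : {ffun 'I_k -> 'I_k}).

Definition word_of_perm s := [seq val (s i) | i <- enum 'I_k].

Definition tperm_word (a b : nat) :=
  [seq if i == a then b else if i == b then a else i | i <- iota 0 k].

Lemma perm_of_wordE w i : perm_word w -> val (perm_of_word w i) = nth 0 w i.
Proof.
case/and3P => /eqP sz_w uniq_w /allP lt_w.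
have lt_wi (j : 'I_k) : nth 0 w j < k by apply: lt_w; rewrite mem_nth ?sz_w.
have inj_w : injectiveb [ffun i : 'I_k => insubd i (nth 0 w i)].
  apply/injectiveP => j1 j2; rewrite !ffunE => /(congr1 val).
  by rewrite !val_insubd !lt_wi => /eqP; rewrite nth_uniq ?sz_w // => /eqP /val_inj.
by rewrite -pvalE insubdK // ffunE val_insubd lt_wi.
Qed.

Lemma perm_of_word_inj : {in perm_word &, injective perm_of_word}.
Proof.
move=> u w u_ok w_ok eq_uw; have /and3P[/eqP sz_u _ _] := u_ok.
have /and3P[/eqP sz_w _ _] := w_ok.
apply: (@eq_from_nth _ 0) => [|i]; first by rewrite sz_u sz_w.
rewrite sz_u => lt_ik; have := congr1 (fun s => val (s (Ordinal lt_ik))) eq_uw.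
by rewrite /= !perm_of_wordE.
Qed.

Lemma perm_word_iota : perm_word (iota 0 k).
Proof. by rewrite /perm_word size_iota iota_uniq eqxx; apply/allP => i; rewrite mem_iota. Qed.

Lemma perm_of_word_iota : perm_of_word (iota 0 k) = 1.
Proof.
by apply/permP => i; apply/val_inj; rewrite perm_of_wordE ?perm_word_iota // nth_iota ?perm1.
Qed.

Lemma perm_word_mul u w : perm_word u -> perm_word w -> perm_word (word_mul u w).
Proof.
case/and3P=> /eqP sz_u uniq_u /allP lt_u /and3P[/eqP sz_w uniq_w /allP lt_w].
rewrite /perm_word size_map sz_u eqxx /=; apply/andP; split.
  rewrite map_inj_in_uniq // => i j /lt_u lt_i /lt_u lt_j /eqP.
  by rewrite nth_uniq ?sz_w // => /eqP.
by apply/allP => _ /mapP[i /lt_u lt_i ->]; apply: lt_w; rewrite mem_nth ?sz_w.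
Qed.

Lemma perm_of_word_mul u w : perm_word u -> perm_word w ->
  perm_of_word (word_mul u w) = perm_of_word u * perm_of_word w.
Proof.
move=> u_ok w_ok; apply/permP => i; apply/val_inj.
rewrite permM !perm_of_wordE ?perm_word_mul // (nth_map 0) //.
by case/and3P: u_ok => /eqP->.
Qed.

Lemma perm_word_of_perm s : perm_word (word_of_perm s).
Proof.
rewrite /perm_word size_map size_enum_ord eqxx map_inj_uniq ?enum_uniq /=.
  by apply/allP => _ /mapP[i _ ->]; apply: ltn_ord.
by move=> i j /val_inj/perm_inj.
Qed.

Lemma word_of_permK : cancel word_of_perm perm_of_word.
Proof.
move=> s; apply/permP => i; apply/val_inj.
by rewrite perm_of_wordE ?perm_word_of_perm // (nth_map i) ?size_enum_ord // nth_ord_enum.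
Qed.

Lemma word_of_tperm (x y : 'I_k) : word_of_perm (tperm x y) = tperm_word x y.
Proof.
rewrite /tperm_word -val_enum_ord -map_comp; apply: eq_map => i /=.
by rewrite permE /= -!val_eqE; do !case: ifP.
Qed.

Lemma perm_of_word_tperm (x y : 'I_k) : perm_of_word (tperm_word x y) = tperm x y.
Proof. by rewrite -word_of_tperm word_of_permK. Qed.

End PermWords.

(** * Finite groups given by a Cayley table *)

Lemma gen_sub_mulr_closed (gT : finGroupType) (S Y : {set gT}) :
  1 \in S -> (forall x y, x \in S -> y \in Y -> x * y \in S) -> <<Y>> \subset S.
Proof.
move=> S1 mulSY; pose A := [set y | [forall x, (x \in S) ==> (x * y \in S)]].
have AP y : reflect (forall x, x \in S -> x * y \in S) (y \in A).
  by rewrite inE; apply: (iffP forallP) => Ay x; apply/implyP/Ay.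
have gA : group_set A.
  apply/andP; split; first by apply/AP => x; rewrite mulg1.
  apply/subsetP => _ /mulsgP[y z /AP Ay /AP Az ->].
  by apply/AP => x Sx; rewrite mulgA Az ?Ay.
have sYA : <<Y>> \subset Group gA.
  by rewrite gen_subG; apply/subsetP => y Yy; apply/AP => x /mulSY->.
by apply/subsetP => y /(subsetP sYA)/AP/(_ 1 S1); rewrite mul1g.
Qed.

Section CayleyTable.
Variables (gT : finGroupType) (n : nat) (elt : nat -> gT) (mul : nat -> nat -> nat).

Definition cayley_table :=
  [/\ 0 < n, elt 0 = 1, forall i j, i < n -> j < n -> elt i = elt j -> i = j,
      forall i j, i < n -> j < n -> mul i j < n /\ elt (mul i j) = elt i * elt j
    & forall i, i < n -> has (fun j => mul i j == 0) (iota 0 n)].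

Hypothesis tableP : cayley_table.

Let n_gt0 : 0 < n. Proof. by case: tableP. Qed.
Let elt0 : elt 0 = 1. Proof. by case: tableP. Qed.
Let elt_inj i j : i < n -> j < n -> elt i = elt j -> i = j.
Proof. by case: tableP => _ _ inj _ _; apply: inj. Qed.
Let mul_lt i j : i < n -> j < n -> mul i j < n.
Proof. by case: tableP => _ _ _ mulP _ lt_i lt_j; case: (mulP i j lt_i lt_j). Qed.
Let eltM i j : i < n -> j < n -> elt (mul i j) = elt i * elt j.
Proof. by case: tableP => _ _ _ mulP _ lt_i lt_j; case: (mulP i j lt_i lt_j). Qed.

Definition tinv i := find (fun j => mul i j == 0) (iota 0 n).

Let tinv_lt i : i < n -> tinv i < n.
Proof. by case: tableP => _ _ _ _ invP /invP; rewrite has_find size_iota. Qed.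

Let eltV i : i < n -> elt (tinv i) = (elt i)^-1.
Proof.
move=> lt_i; have lt_inv := tinv_lt lt_i.
case: tableP => _ _ _ _ /(_ i lt_i)/(nth_find 0)/eqP; rewrite -/(tinv i) nth_iota //.
by move/(congr1 elt); rewrite eltM // elt0 => /eqP; rewrite -eq_invg_mul eq_sym => /eqP.
Qed.

Fixpoint tpow i m := if m is m'.+1 then mul (tpow i m') i else 0.

Fixpoint teval (e : seq nat) (t : term) : nat :=
  match t with
  | Cst j => nth 0 e j
  | Idx => 0
  | Inv t1 => tinv (teval e t1)
  | Exp t1 m => tpow (teval e t1) m
  | Mul t1 t2 => mul (teval e t1) (teval e t2)
  | Conj t1 t2 => mul (tinv (teval e t2)) (mul (teval e t1) (teval e t2))
  | Comm t1 t2 =>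
    mul (tinv (teval e t1)) (mul (tinv (teval e t2)) (mul (teval e t1) (teval e t2)))
  end.

Fixpoint tholds (e : seq nat) (f : formula) : bool :=
  match f with
  | Eq2 s t => teval e s == teval e t
  | And f1 f2 => tholds e f1 && tholds e f2
  end.

Lemma teval_sound e t : all (fun i => i < n) e ->
  teval e t < n /\ elt (teval e t) = eval (map elt e) t.
Proof.
move=> /allP lt_e; elim: t => /= [j | | t [lt_t <-] | t [lt_t <-] m
  | t1 [lt1 <-] t2 [lt2 <-] | t1 [lt1 <-] t2 [lt2 <-] | t1 [lt1 <-] t2 [lt2 <-]].
- have [lt_j | le_j] := ltnP j (size e); last by rewrite !nth_default ?size_map.
  by rewrite (nth_map 0) //; split=> //; apply/lt_e/mem_nth.
- by [].
- by rewrite tinv_lt ?eltV.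
- by elim: m => [|m [lt_m eq_m]] //=; rewrite mul_lt ?eltM // eq_m expgSr.
- by rewrite mul_lt ?eltM.
- by rewrite !(mul_lt, tinv_lt) // !(eltM, eltV, mul_lt, tinv_lt) // conjgE.
- by rewrite !(mul_lt, tinv_lt) // !(eltM, eltV, mul_lt, tinv_lt) // commgEl conjgE.
Qed.

Lemma tholds_sound e f : all (fun i => i < n) e -> tholds e f -> holds (map elt e) f.
Proof.
move=> lt_e; elim: f => [s t | f1 IH1 f2 IH2] /=; last by case/andP=> /IH1-> /IH2->.
by have [_ <-] := teval_sound s lt_e; have [_ <-] := teval_sound t lt_e => /eqP->.
Qed.

Definition visit y (st : seq nat * seq bool) g :=
  let z := mul y g in
  if nth false st.2 z then st else (z :: st.1, set_nth false st.2 z true).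

Fixpoint search gens fuel todo (seen : seq bool) :=
  if fuel is fuel'.+1 then
    if todo is y :: todo' then
      let st := foldl (visit y) (todo', seen) gens in search gens fuel' st.1 st.2
    else seen
  else seen.

(* Only soundness of the search is proved; that its result is closed is
   checked with [mul_closed] below. *)
Definition span gens := search gens n [:: 0] [:: true].

Lemma span_sound gens (G : {group gT}) :
  all (fun g => (g < n) && (elt g \in G)) gens ->
  forall i, nth false (span gens) i -> (i < n) && (elt i \in G).
Proof.
move=> /allP gensG; pose P i := (i < n) && (elt i \in G).
pose inv todo (seen : seq bool) := all P todo /\ forall i, nth false seen i -> P i.
have visitP y st g : P y -> g \in gens -> inv st.1 st.2 ->
    inv (visit y st g).1 (visit y st g).2.
  case/andP=> lt_y Gy /gensG/andP[lt_g Gg] [todoP seenP]; rewrite /visit.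
  have Pz : P (mul y g) by rewrite /P mul_lt ?eltM ?groupM.
  case: ifP => _ //; split; first by rewrite /= Pz.
  by move=> i; rewrite nth_set_nth /=; case: eqP => [->|_ /seenP].
have foldP y gs st : P y -> {subset gs <= gens} -> inv st.1 st.2 ->
    inv (foldl (visit y) st gs).1 (foldl (visit y) st gs).2.
  elim: gs st => [|g gs IHgs] st //= Py sub_gs st_inv.
  apply: IHgs => //; first by move=> h h_gs; apply: sub_gs; rewrite inE h_gs orbT.
  by apply: visitP; rewrite ?sub_gs ?mem_head.
have searchP fuel todo seen :
    inv todo seen -> forall i, nth false (search gens fuel todo seen) i -> P i.
  elim: fuel todo seen => [|fuel IHfuel] [|y todo] seen [todoP seenP] //=.
  by case/andP: todoP => Py todoP; apply: IHfuel; apply: foldP.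
have P0 : P 0 by rewrite /P elt0 group1 andbT.
apply: searchP; split; first by rewrite /= P0.
by case=> [_|i] //; rewrite /= nth_nil.
Qed.

Definition bits_set (bs : seq bool) : {set gT} := [set elt i | i : 'I_n & nth false bs i].

Lemma card_bits_set bs : #|bits_set bs| = count (nth false bs) (iota 0 n).
Proof.
rewrite card_in_imset; last by move=> i j _ _ /elt_inj eq_ij; apply/val_inj/eq_ij.
rewrite cardE /enum_mem size_filter -enumT -val_enum_ord count_map.
by apply: eq_count => i; rewrite /= inE.
Qed.

Lemma bits_set_full bs : all (nth false bs) (iota 0 n) -> bits_set bs = [set elt i | i : 'I_n].
Proof.
move=> /allP full; apply/setP => x; apply/imsetP/imsetP => -[i _ ->]; exists i => //.
by rewrite inE full // mem_iota ltn_ord.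
Qed.

Definition mul_closed gens (bs : seq bool) :=
  nth false bs 0 &&
  all (fun i => nth false bs i ==> all (fun g => nth false bs (mul i g)) gens) (iota 0 n).

Lemma span_gen gens : all (fun i => i < n) gens -> mul_closed gens (span gens) ->
  bits_set (span gens) = <<[set:: map elt gens]>>.
Proof.
move=> /allP lt_gens /andP[span0 /allP span_mul]; apply/eqP; rewrite eqEsubset.
apply/andP; split.
  apply/subsetP => x /imsetP[i]; rewrite inE => span_i ->.
  have gens_gen : all (fun g => (g < n) && (elt g \in <<[set:: map elt gens]>>)) gens.
    by apply/allP => g g_in; rewrite lt_gens //= mem_gen // inE map_f.
  by case/andP: (span_sound gens_gen span_i).
apply: gen_sub_mulr_closed; first by apply/imsetP; exists (Ordinal n_gt0); rewrite ?inE.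
move=> x y /imsetP[i]; rewrite !inE => span_i -> /mapP[g g_in ->].
have lt_g : g < n := lt_gens g g_in.
have lt_ig : mul i g < n by rewrite mul_lt.
have span_ig : nth false (span gens) (mul i g).
  have := span_mul i; rewrite mem_iota ltn_ord => /(_ isT)/implyP/(_ span_i).
  by move/allP/(_ g g_in).
by apply/imsetP; exists (Ordinal lt_ig); rewrite ?inE // eltM.
Qed.

Lemma gen_isoGrp gs p :
  all (fun i => i < n) gs -> mul_closed gs (span gs) ->
  size gs = pres_arity p -> tholds gs (pres_relations p) ->
  (forall rT (K : {group rT}), K \homg Grp p -> #|K| <= count (nth false (span gs)) (iota 0 n)) ->
  <<[set:: map elt gs]>> \isog Grp p.
Proof.
move=> lt_gs closed_gs sz_gs rels maxp; apply: isoGrp_of_card_max.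
  by apply: gen_homGrp; rewrite ?size_map ?tholds_sound.
by move=> rT K /maxp; rewrite -card_bits_set span_gen.
Qed.

Definition extension_closed (L : seq (seq nat)) :=
  let spans := map span L in
  all (fun gs => let S := span gs in
         all (fun i => nth false S i ||
                let S' := span (rcons gs i) in (S' \in spans) && all (nth false S') (rcons gs i))
           (iota 0 n)) L.

Section SubgroupList.
Variable L : seq (seq nat).
Hypothesis L0 : [:: 0] \in L.
Hypothesis L_ok : all (fun gs => all (fun i => i < n) gs && mul_closed gs (span gs)) L.
Hypothesis L_ext : extension_closed L.

Local Notation gen_of gs := <<[set:: map elt gs]>>.

Let spanL gs : gs \in L -> bits_set (span gs) = gen_of gs.
Proof. by case/(allP L_ok)/andP; apply: span_gen. Qed.

Lemma extension_step gs (H : {group gT}) x :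
  gs \in L -> gen_of gs \subset H -> x \in H -> x \in [set elt i | i : 'I_n] ->
  x \notin gen_of gs ->
  exists2 gs', gs' \in L & gen_of gs \proper gen_of gs' /\ gen_of gs' \subset H.
Proof.
move=> gsL sGH Hx /imsetP[i _ def_x] Gx.
have /allP/(_ i) := allP L_ext gs gsL; rewrite mem_iota ltn_ord => /(_ isT).
have -> : nth false (span gs) i = false.
  by apply: contraNF Gx => span_i; rewrite -spanL // def_x; apply/imsetP; exists i; rewrite ?inE.
case/andP=> /mapP[gs' gs'L eq_span] /allP in_span; exists gs' => //.
have lt_gs : all (fun i => i < n) (rcons gs i).
  by case/(allP L_ok)/andP: gsL => lt_gs _; rewrite all_rcons lt_gs andbT; apply: ltn_ord.
have in_G' j : j \in rcons gs i -> elt j \in gen_of gs'.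
  move=> j_in; rewrite -spanL // -eq_span; apply/imsetP.
  by exists (Ordinal (allP lt_gs j j_in)); rewrite ?inE ?in_span.
split.
  rewrite properE gen_subG; apply/andP; split.
    apply/subsetP => y; rewrite inE => /mapP[g g_gs ->].
    by rewrite in_G' // mem_rcons inE g_gs orbT.
  by apply/subsetPn; exists x => //; rewrite def_x in_G' // mem_rcons mem_head.
rewrite -spanL // -eq_span; apply/subsetP => y /imsetP[j]; rewrite inE => span_j ->.
suff /andP[] : (j < n) && (elt j \in H) by [].
apply: span_sound span_j; apply/allP => g; rewrite mem_rcons inE => /predU1P[->|g_gs].
  by rewrite ltn_ord -def_x.
rewrite (allP lt_gs) ?mem_rcons ?inE ?g_gs ?orbT //=.
by apply: (subsetP sGH); rewrite mem_gen // inE map_f.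
Qed.

Lemma subgroup_cover (H : {group gT}) :
  H \subset [set elt i | i : 'I_n] -> exists2 gs, gs \in L & H :=: gen_of gs.
Proof.
move=> sHT; suff grow m gs : gs \in L -> gen_of gs \subset H -> #|H| - #|gen_of gs| < m ->
    exists2 gs, gs \in L & H :=: gen_of gs.
  apply: (grow #|H|.+1 [:: 0]) => //; last by rewrite ltnS leq_subr.
  by rewrite gen_subG; apply/subsetP => y; rewrite !inE => /eqP->; rewrite elt0 group1.
elim: m gs => // m IHm gs gsL sGH lt_m.
have [sHG | /subsetPn[x Hx Gx]] := boolP (H \subset gen_of gs).
  by exists gs => //; apply/eqP; rewrite eqEsubset sHG.
have [gs' gs'L [ltGG' sG'H]] := extension_step gsL sGH Hx (subsetP sHT x Hx) Gx.
apply: (IHm _ gs'L sG'H).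
by move: lt_m (proper_card ltGG') (subset_leq_card sG'H); lia.
Qed.
End SubgroupList.

End CayleyTable.

(** * Subgroups of Aut(K_{3,3}) *)

Definition aut_gen_words : seq (seq nat) :=
  [:: tperm_word 6 0 1; word_mul (tperm_word 6 1 2) (tperm_word 6 0 1);
      tperm_word 6 3 4; word_mul (tperm_word 6 4 5) (tperm_word 6 3 4);
      word_mul (word_mul (tperm_word 6 0 3) (tperm_word 6 1 4)) (tperm_word 6 2 5)].

Lemma aut_gen_wordsE :
  map (perm_of_word 6) aut_gen_words = [:: t12; c123; t45; c456; swap].
Proof.
have vE i : i < 6 -> nat_of_ord (v i.+1) = i by move=> lt_i; rewrite /v inordK.
rewrite /t12 /c123 /t45 /c456 /swap -!perm_of_word_tperm !vE //.
by rewrite -!perm_of_word_mul.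
Qed.

(* Closure under products is checked in [aut_table_ok], so the number of
   rounds only needs to be large enough. *)
Definition aut_words : seq (seq nat) := Eval vm_compute in
  let grow L :=
    L ++ undup [seq u <- [seq word_mul w g | w <- L, g <- aut_gen_words] | u \notin L] in
  iter 6 grow [:: iota 0 6].

Definition aut_elt i := perm_of_word 6 (nth [::] aut_words i).
Definition aut_index w := index w aut_words.
Definition aut_table := [seq [seq aut_index (word_mul u w) | w <- aut_words] | u <- aut_words].
Definition aut_mul i j := nth 0 (nth [::] aut_table i) j.

Local Notation N := (size aut_words).

Definition aut_table_ok :=
  [&& nth [::] aut_words 0 == iota 0 6, uniq aut_words, all (perm_word 6) aut_words,
      all (fun u => all (fun w => word_mul u w \in aut_words) aut_words) aut_words
    & all (fun i => has (fun j => aut_mul i j == 0) (iota 0 N)) (iota 0 N)].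

Lemma aut_table_okP : aut_table_ok. Proof. by vm_compute. Qed.

Lemma aut_mulE i j : i < N -> j < N ->
  aut_mul i j = aut_index (word_mul (nth [::] aut_words i) (nth [::] aut_words j)).
Proof. by move=> lt_i lt_j; rewrite /aut_mul (nth_map [::]) // (nth_map [::]). Qed.

Lemma aut_tableP : cayley_table N aut_elt aut_mul.
Proof.
have /and5P[/eqP w0 uniq_w /allP perm_w /allP mul_w /allP inv_w] := aut_table_okP.
have ok_nth i : i < N -> perm_word 6 (nth [::] aut_words i) by move=> ?; apply/perm_w/mem_nth.
have mem_mul i j : i < N -> j < N ->
    word_mul (nth [::] aut_words i) (nth [::] aut_words j) \in aut_words.
  by move=> lt_i lt_j; apply: (allP (mul_w _ (mem_nth _ lt_i))); apply: mem_nth.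
split.
- by rewrite lt0n size_eq0; apply: contra_eq_neq w0 => ->.
- by rewrite /aut_elt w0 perm_of_word_iota.
- move=> i j lt_i lt_j eq_ij; apply/eqP; rewrite -(nth_uniq [::] lt_i lt_j uniq_w).
  by apply/eqP; apply: perm_of_word_inj eq_ij; apply: ok_nth.
- move=> i j lt_i lt_j; have mem_ij := mem_mul i j lt_i lt_j.
  rewrite aut_mulE //; split; first by rewrite /aut_index index_mem.
  by rewrite {1}/aut_elt /aut_index (nth_index _ mem_ij) perm_of_word_mul ?ok_nth.
- by move=> i lt_i; apply: inv_w; rewrite mem_iota.
Qed.

Definition presentations : seq (term -> type) :=
  [:: wreath_pres; D3xD3_pres; Z3Z3_Z4_pres; Z3Z3_Z2_pres; D3xZ3_pres; dihedral_pres 6;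
      Z3xZ3_pres; dihedral_pres 4; dihedral_pres 3; cyclic_pres 6; dihedral_pres 2;
      cyclic_pres 4; cyclic_pres 3; cyclic_pres 2; trivial_pres].

Definition presented_orders : seq nat := [:: 72; 36; 36; 18; 18; 12; 9; 8; 6; 6; 4; 4; 3; 2; 1]%N.

Lemma listed_typesE :
  listed_types =
  List.map (fun p (gT : finGroupType) (G : {set gT}) => G \isog Grp p) presentations.
Proof. by []. Qed.

Lemma card_homGrp_presented k rT (H : {group rT}) : k < size presentations ->
  hom H (nth trivial_pres presentations k) -> #|H| <= nth 0 presented_orders k.
Proof.
do 15?[case: k => [|k]] => //= _.
- exact: card_homGrp_wreath.
- exact: card_homGrp_D3xD3.
- exact: card_homGrp_Z3Z3_Z4.
- exact: card_homGrp_Z3Z3_Z2.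
- exact: card_homGrp_D3xZ3.
- exact: card_homGrp_dihedral.
- exact: card_homGrp_Z3xZ3.
- exact: card_homGrp_dihedral.
- exact: card_homGrp_dihedral.
- exact: card_homGrp_cyclic.
- exact: card_homGrp_dihedral.
- exact: card_homGrp_cyclic.
- exact: card_homGrp_cyclic.
- exact: card_homGrp_cyclic.
- exact: card_homGrp_trivial.
Qed.

Local Notation aut_span := (span N aut_mul).

Definition aut_gens := map aut_index aut_gen_words.

Definition aut_gens_ok :=
  [&& all (fun i => i < N) aut_gens, mul_closed N aut_mul aut_gens (aut_span aut_gens)
    & all (nth false (aut_span aut_gens)) (iota 0 N)].

Lemma aut_gens_okP : aut_gens_ok. Proof. by vm_compute. Qed.

Canonical AutK33_group := Eval hnf in [group of AutK33].

Lemma AutK33_table : AutK33 = [set aut_elt i | i : 'I_N].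
Proof.
have /and3P[lt_gens closed_gens full] := aut_gens_okP.
have gensE : map aut_elt aut_gens = [:: t12; c123; t45; c456; swap].
  rewrite -aut_gen_wordsE -map_comp; apply/eq_in_map => w w_gen /=.
  have := allP lt_gens _ (map_f aut_index w_gen); rewrite /aut_index index_mem => w_in.
  by rewrite /aut_elt (nth_index _ w_in).
have -> : AutK33 = <<[set:: map aut_elt aut_gens]>>.
  by rewrite gensE; congr <<_>>; apply/setP => x; rewrite !inE !orbA.
by rewrite -(span_gen aut_tableP lt_gens closed_gens) bits_set_full.
Qed.
(* One entry (k, ws) per subgroup of Aut(K_{3,3}): the words ws (a word lists
   the images of 0, ..., 5, vertex k being k - 1) generate the subgroup and
   satisfy the k-th presentation. *)
Definition subgroup_certificate : seq (nat * seq (seq nat)) := [::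
  (0, [:: [:: 1; 2; 0; 3; 4; 5]; [:: 1; 0; 2; 3; 4; 5]; [:: 0; 1; 2; 4; 5; 3];
         [:: 0; 1; 2; 4; 3; 5]; [:: 3; 4; 5; 0; 1; 2]]);
  (1, [:: [:: 1; 2; 0; 4; 5; 3]; [:: 4; 3; 5; 1; 0; 2]; [:: 2; 0; 1; 4; 5; 3];
         [:: 3; 4; 5; 0; 1; 2]]);
  (1, [:: [:: 1; 2; 0; 3; 4; 5]; [:: 1; 0; 2; 3; 4; 5]; [:: 0; 1; 2; 4; 5; 3];
         [:: 0; 1; 2; 4; 3; 5]]);
  (2, [:: [:: 1; 2; 0; 3; 4; 5]; [:: 0; 1; 2; 4; 5; 3]; [:: 3; 4; 5; 1; 0; 2]]);
  (3, [:: [:: 1; 2; 0; 3; 4; 5]; [:: 0; 1; 2; 4; 5; 3]; [:: 1; 0; 2; 4; 3; 5]]);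
  (4, [:: [:: 2; 0; 1; 4; 5; 3]; [:: 3; 4; 5; 0; 1; 2]; [:: 1; 2; 0; 4; 5; 3]]);
  (4, [:: [:: 1; 2; 0; 4; 5; 3]; [:: 4; 3; 5; 1; 0; 2]; [:: 2; 0; 1; 4; 5; 3]]);
  (4, [:: [:: 1; 2; 0; 3; 4; 5]; [:: 1; 0; 2; 3; 4; 5]; [:: 0; 1; 2; 4; 5; 3]]);
  (4, [:: [:: 0; 1; 2; 4; 5; 3]; [:: 0; 1; 2; 4; 3; 5]; [:: 1; 2; 0; 3; 4; 5]]);
  (5, [:: [:: 1; 2; 0; 5; 4; 3]; [:: 1; 0; 2; 3; 4; 5]]);
  (5, [:: [:: 1; 2; 0; 3; 5; 4]; [:: 1; 0; 2; 3; 4; 5]]);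
  (5, [:: [:: 1; 2; 0; 4; 3; 5]; [:: 1; 0; 2; 3; 4; 5]]);
  (5, [:: [:: 2; 1; 0; 4; 5; 3]; [:: 0; 1; 2; 4; 3; 5]]);
  (5, [:: [:: 0; 2; 1; 4; 5; 3]; [:: 0; 1; 2; 4; 3; 5]]);
  (5, [:: [:: 1; 0; 2; 4; 5; 3]; [:: 0; 1; 2; 4; 3; 5]]);
  (5, [:: [:: 5; 4; 3; 0; 2; 1]; [:: 3; 4; 5; 0; 1; 2]]);
  (5, [:: [:: 4; 5; 3; 1; 2; 0]; [:: 4; 3; 5; 1; 0; 2]]);
  (5, [:: [:: 3; 5; 4; 1; 0; 2]; [:: 5; 3; 4; 1; 2; 0]]);
  (5, [:: [:: 3; 4; 5; 2; 0; 1]; [:: 5; 4; 3; 2; 1; 0]]);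
  (5, [:: [:: 5; 3; 4; 0; 1; 2]; [:: 5; 4; 3; 2; 1; 0]]);
  (5, [:: [:: 4; 3; 5; 2; 1; 0]; [:: 4; 5; 3; 2; 0; 1]]);
  (6, [:: [:: 1; 2; 0; 3; 4; 5]; [:: 0; 1; 2; 4; 5; 3]]);
  (7, [:: [:: 4; 3; 5; 1; 2; 0]; [:: 2; 1; 0; 3; 4; 5]]);
  (7, [:: [:: 3; 4; 5; 0; 2; 1]; [:: 0; 2; 1; 3; 4; 5]]);
  (7, [:: [:: 5; 4; 3; 2; 0; 1]; [:: 1; 0; 2; 3; 4; 5]]);
  (7, [:: [:: 3; 4; 5; 2; 1; 0]; [:: 2; 1; 0; 3; 4; 5]]);
  (7, [:: [:: 4; 5; 3; 1; 0; 2]; [:: 0; 1; 2; 5; 4; 3]]);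
  (7, [:: [:: 5; 3; 4; 0; 2; 1]; [:: 1; 0; 2; 3; 4; 5]]);
  (7, [:: [:: 5; 3; 4; 2; 1; 0]; [:: 0; 1; 2; 4; 3; 5]]);
  (7, [:: [:: 4; 5; 3; 0; 2; 1]; [:: 2; 1; 0; 3; 4; 5]]);
  (7, [:: [:: 3; 4; 5; 1; 0; 2]; [:: 1; 0; 2; 3; 4; 5]]);
  (8, [:: [:: 1; 2; 0; 3; 4; 5]; [:: 1; 0; 2; 4; 3; 5]]);
  (8, [:: [:: 1; 2; 0; 3; 4; 5]; [:: 1; 0; 2; 3; 5; 4]]);
  (8, [:: [:: 0; 1; 2; 4; 5; 3]; [:: 1; 0; 2; 4; 3; 5]]);
  (8, [:: [:: 1; 2; 0; 3; 4; 5]; [:: 1; 0; 2; 5; 4; 3]]);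
  (8, [:: [:: 0; 1; 2; 4; 5; 3]; [:: 0; 2; 1; 4; 3; 5]]);
  (8, [:: [:: 0; 1; 2; 4; 5; 3]; [:: 2; 1; 0; 4; 3; 5]]);
  (8, [:: [:: 1; 2; 0; 4; 5; 3]; [:: 1; 0; 2; 5; 4; 3]]);
  (8, [:: [:: 2; 0; 1; 4; 5; 3]; [:: 1; 0; 2; 5; 4; 3]]);
  (8, [:: [:: 1; 2; 0; 4; 5; 3]; [:: 0; 2; 1; 5; 4; 3]]);
  (8, [:: [:: 1; 2; 0; 5; 3; 4]; [:: 1; 0; 2; 3; 5; 4]]);
  (8, [:: [:: 1; 2; 0; 4; 5; 3]; [:: 1; 0; 2; 4; 3; 5]]);
  (8, [:: [:: 2; 0; 1; 4; 5; 3]; [:: 0; 2; 1; 5; 4; 3]]);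
  (8, [:: [:: 1; 2; 0; 3; 4; 5]; [:: 1; 0; 2; 3; 4; 5]]);
  (8, [:: [:: 0; 1; 2; 4; 5; 3]; [:: 0; 1; 2; 4; 3; 5]]);
  (8, [:: [:: 1; 2; 0; 4; 5; 3]; [:: 4; 3; 5; 1; 0; 2]]);
  (8, [:: [:: 2; 0; 1; 4; 5; 3]; [:: 3; 4; 5; 0; 1; 2]]);
  (9, [:: [:: 1; 2; 0; 3; 5; 4]]);
  (9, [:: [:: 1; 2; 0; 5; 4; 3]]);
  (9, [:: [:: 0; 2; 1; 4; 5; 3]]);
  (9, [:: [:: 1; 2; 0; 4; 3; 5]]);
  (9, [:: [:: 2; 1; 0; 4; 5; 3]]);
  (9, [:: [:: 1; 0; 2; 4; 5; 3]]);
  (9, [:: [:: 4; 3; 5; 0; 2; 1]]);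
  (9, [:: [:: 3; 4; 5; 1; 2; 0]]);
  (9, [:: [:: 5; 4; 3; 1; 0; 2]]);
  (9, [:: [:: 3; 4; 5; 2; 0; 1]]);
  (9, [:: [:: 5; 3; 4; 2; 0; 1]]);
  (9, [:: [:: 3; 5; 4; 2; 1; 0]]);
  (10, [:: [:: 1; 0; 2; 3; 5; 4]; [:: 4; 5; 3; 2; 0; 1]]);
  (10, [:: [:: 0; 2; 1; 3; 5; 4]; [:: 3; 4; 5; 0; 1; 2]]);
  (10, [:: [:: 1; 0; 2; 5; 4; 3]; [:: 3; 5; 4; 0; 2; 1]]);
  (10, [:: [:: 0; 2; 1; 4; 3; 5]; [:: 5; 3; 4; 1; 2; 0]]);
  (10, [:: [:: 2; 1; 0; 3; 5; 4]; [:: 4; 3; 5; 1; 0; 2]]);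
  (10, [:: [:: 0; 2; 1; 5; 4; 3]; [:: 4; 3; 5; 1; 0; 2]]);
  (10, [:: [:: 1; 0; 2; 4; 3; 5]; [:: 4; 3; 5; 1; 0; 2]]);
  (10, [:: [:: 2; 1; 0; 4; 3; 5]; [:: 3; 5; 4; 0; 2; 1]]);
  (10, [:: [:: 2; 1; 0; 5; 4; 3]; [:: 3; 4; 5; 0; 1; 2]]);
  (10, [:: [:: 0; 1; 2; 4; 3; 5]; [:: 2; 1; 0; 3; 4; 5]]);
  (10, [:: [:: 0; 1; 2; 4; 3; 5]; [:: 0; 2; 1; 3; 4; 5]]);
  (10, [:: [:: 0; 1; 2; 4; 3; 5]; [:: 1; 0; 2; 3; 4; 5]]);
  (10, [:: [:: 0; 1; 2; 3; 5; 4]; [:: 2; 1; 0; 3; 4; 5]]);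
  (10, [:: [:: 1; 0; 2; 3; 4; 5]; [:: 0; 1; 2; 5; 4; 3]]);
  (10, [:: [:: 0; 1; 2; 3; 5; 4]; [:: 0; 2; 1; 3; 4; 5]]);
  (10, [:: [:: 1; 0; 2; 3; 4; 5]; [:: 0; 1; 2; 3; 5; 4]]);
  (10, [:: [:: 0; 1; 2; 5; 4; 3]; [:: 2; 1; 0; 3; 4; 5]]);
  (10, [:: [:: 0; 2; 1; 3; 4; 5]; [:: 0; 1; 2; 5; 4; 3]]);
  (11, [:: [:: 3; 5; 4; 0; 1; 2]]);
  (11, [:: [:: 5; 3; 4; 1; 0; 2]]);
  (11, [:: [:: 4; 5; 3; 1; 0; 2]]);
  (11, [:: [:: 4; 5; 3; 2; 1; 0]]);
  (11, [:: [:: 5; 4; 3; 0; 1; 2]]);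
  (11, [:: [:: 5; 3; 4; 2; 1; 0]]);
  (11, [:: [:: 3; 5; 4; 1; 2; 0]]);
  (11, [:: [:: 3; 5; 4; 2; 0; 1]]);
  (11, [:: [:: 4; 3; 5; 0; 1; 2]]);
  (12, [:: [:: 0; 1; 2; 4; 5; 3]]);
  (12, [:: [:: 1; 2; 0; 3; 4; 5]]);
  (12, [:: [:: 2; 0; 1; 4; 5; 3]]);
  (12, [:: [:: 1; 2; 0; 4; 5; 3]]);
  (13, [:: [:: 4; 3; 5; 1; 0; 2]]);
  (13, [:: [:: 3; 4; 5; 0; 1; 2]]);
  (13, [:: [:: 5; 4; 3; 2; 1; 0]]);
  (13, [:: [:: 5; 3; 4; 1; 2; 0]]);
  (13, [:: [:: 4; 5; 3; 2; 0; 1]]);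
  (13, [:: [:: 3; 5; 4; 0; 2; 1]]);
  (13, [:: [:: 1; 0; 2; 5; 4; 3]]);
  (13, [:: [:: 0; 2; 1; 5; 4; 3]]);
  (13, [:: [:: 1; 0; 2; 3; 5; 4]]);
  (13, [:: [:: 1; 0; 2; 4; 3; 5]]);
  (13, [:: [:: 2; 1; 0; 4; 3; 5]]);
  (13, [:: [:: 2; 1; 0; 5; 4; 3]]);
  (13, [:: [:: 0; 2; 1; 3; 5; 4]]);
  (13, [:: [:: 0; 2; 1; 4; 3; 5]]);
  (13, [:: [:: 2; 1; 0; 3; 5; 4]]);
  (13, [:: [:: 1; 0; 2; 3; 4; 5]]);
  (13, [:: [:: 0; 2; 1; 3; 4; 5]]);
  (13, [:: [:: 0; 1; 2; 4; 3; 5]]);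
  (13, [:: [:: 2; 1; 0; 3; 4; 5]]);
  (13, [:: [:: 0; 1; 2; 3; 5; 4]]);
  (13, [:: [:: 0; 1; 2; 5; 4; 3]]);
  (14, [:: [:: 0; 1; 2; 3; 4; 5]])]%N.

Local Notation cert_group ws := <<[set:: map aut_elt (map aut_index ws)]>>.

Definition cert_gens := [seq map aut_index c.2 | c <- subgroup_certificate].

Definition cert_closed_ok :=
  [&& [:: 0] \in cert_gens,
      all (fun gs => all (fun i => i < N) gs && mul_closed N aut_mul gs (aut_span gs)) cert_gens
    & extension_closed N aut_mul cert_gens].

Definition cert_entry_ok (c : nat * seq (seq nat)) :=
  let: (k, ws) := c in
  let gs := map aut_index ws in
  let p := nth trivial_pres presentations k in
  [&& k < size presentations, size gs == pres_arity p, tholds N aut_mul gs (pres_relations p)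
    & count (nth false (aut_span gs)) (iota 0 N) == nth 0 presented_orders k].

Definition cert_types_ok :=
  all cert_entry_ok subgroup_certificate &&
  all (fun k => has (fun c => c.1 == k) subgroup_certificate) (iota 0 (size presentations)).

Lemma cert_closed_okP : cert_closed_ok. Proof. by vm_compute. Qed.
Lemma cert_types_okP : cert_types_ok. Proof. by vm_compute. Qed.

Lemma cert_gens_closed k ws : (k, ws) \in subgroup_certificate ->
  all (fun i => i < N) (map aut_index ws) &&
  mul_closed N aut_mul (map aut_index ws) (aut_span (map aut_index ws)).
Proof.
have /and3P[_ /allP closed _] := cert_closed_okP.
by move=> c_in; apply: closed (map_f (fun c => map aut_index c.2) c_in).
Qed.

Lemma cert_isoGrp k ws : (k, ws) \in subgroup_certificate ->
  k < size presentations /\ iso (cert_group ws) (nth trivial_pres presentations k).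
Proof.
move=> c_in; have /andP[lt_gs closed_gs] := cert_gens_closed c_in.
have /andP[/allP entries_ok _] := cert_types_okP.
have /and4P[lt_k /eqP sz_ws rels /eqP card_ws] := entries_ok _ c_in.
split=> //; apply: (gen_isoGrp aut_tableP lt_gs closed_gs sz_ws rels) => rT K.
by rewrite card_ws; apply: card_homGrp_presented.
Qed.

Lemma AutK33_classification (H : {group {perm 'I_6}}) :
  H \subset AutK33 -> exists2 p, List.In p presentations & H \isog Grp p.
Proof.
have /and3P[cert0 cert_ok cert_ext] := cert_closed_okP.
rewrite AutK33_table => sHT.
have [_ /mapP[[k ws] c_in ->] ->] := subgroup_cover aut_tableP cert0 cert_ok cert_ext sHT.
have [lt_k isoH] := cert_isoGrp c_in.
by exists (nth trivial_pres presentations k); first exact: nth_In_seq.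
Qed.

Lemma AutK33_realisation p : List.In p presentations ->
  exists2 H : {group {perm 'I_6}}, H \subset AutK33 & H \isog Grp p.
Proof.
case/(In_seq_nth trivial_pres) => k lt_k ->.
have /andP[_ /allP has_k] := cert_types_okP.
have := has_k k; rewrite mem_iota add0n lt_k => /(_ isT)/hasP[[k' ws] c_in /= /eqP eq_k].
have [_ isoH] := cert_isoGrp c_in; rewrite eq_k in isoH.
have /andP[/allP lt_gs _] := cert_gens_closed c_in.
exists (cert_group ws)%G => //; rewrite gen_subG; apply/subsetP => x.
rewrite inE => /mapP[i i_gs ->]; suff : aut_elt i \in AutK33 by [].
by rewrite AutK33_table; apply/imsetP; exists (Ordinal (lt_gs i i_gs)).
Qed.

Theorem theorem3p1 :
  (forall H : {group {perm 'I_6}}, H \subset AutK33 ->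
     exists2 P, List.In P listed_types & P _ (H : {set _}))
  /\
  (forall P, List.In P listed_types ->
     exists2 H : {group {perm 'I_6}}, H \subset AutK33 & P _ (H : {set _})).
Proof.
rewrite listed_typesE; split.
  move=> H /AutK33_classification[p p_in isoH].
  exists (fun (gT : finGroupType) (G : {set gT}) => G \isog Grp p) => //.
  exact: List.in_map.
by move=> _ /List.in_map_iff[p [<- /AutK33_realisation]].
Qed.
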